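(* Let $f\colon A\to X$ and $g\colon A\to Y$ be morphisms in a pre-Hilbert $*$-category, and suppose there is an extension of $g$ along $f$ (a morphism $e\colon X\to Y$ with $ef=g$). Then: (i) there is a unique extension $h$ of $g$ along $f$ such that $\operatorname{Ker} h\geq (\operatorname{Ran} f)^\perp$; (ii) for this $h$, $(\operatorname{Ran} h)^{\perp\perp} = (\operatorname{Ran} g)^{\perp\perp}$; (iii) $f^*f=g^*g$ if and only if $h$ is partially isometric and $\operatorname{Ker} h\leq (\operatorname{Ran} f)^\perp$; (iv) if $f$ is epic, then $f^*f=g^*g$ if and only if $h$ is isometric; (v) if $f$ and $g$ are both epic, then $f^*f=g^*g$ if and only if $h$ is unitary.
   Context: A $*$-category is a category with a choice of $f^*\colon Y\to X$ for each $f\colon X\to Y$ such that $1^*=1$, $(gf)^*=f^*g^*$, $(f^* )^*=f$; $f$ is an isometry if $f^*f=1$, unitary if it is an invertible isometry, and a partial isometry if $f=ff^*f$. A pre-Hilbert $*$-category is a $*$-category with (R1) a zero object, (R2) orthonormal biproducts of all pairs of objects (biproducts $(X,s_1,r_1,s_2,r_2)$ with $r_k=s_k^*$), (R3) an isometric kernel for every morphism, and (R4) every diagonal $\Delta\colon X\to X\oplus X$ a kernel of some morphism. Subobjects of an object are compared by the usual preorder ($m\le n$ iff $m$ factors through $n$). $\operatorname{Ker} h$ is the subobject represented by a kernel of $h$. The range $\operatorname{Ran} f$ is the smallest subobject of the codomain through which $f$ factors (it exists in a pre-Hilbert $*$-category). For a subobject represented by a monomorphism $m$, its orthogonal complement $(\cdot)^\perp$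 is the subobject represented by a kernel of $m^*$; in particular $(\operatorname{Ran} f)^\perp=\operatorname{Ker} f^*$, and $(\cdot)^{\perp\perp}$ is the complement applied twice. *)

Set Implicit Arguments.

Record StarCat := {
  ob :> Type;
  hom : ob -> ob -> Type;
  comp : forall X Y Z : ob, hom Y Z -> hom X Y -> hom X Z;
  idm : forall X : ob, hom X X;
  star : forall X Y : ob, hom X Y -> hom Y X;
  comp_assoc : forall (W X Y Z : ob) (h : hom Y Z) (g : hom X Y) (f : hom W X),
      comp h (comp g f) = comp (comp h g) f;
  comp_id_l : forall (X Y : ob) (f : hom X Y), comp (idm Y) f = f;
  comp_id_r : forall (X Y : ob) (f : hom X Y), comp f (idm X) = f;
  star_id : forall X : ob, star (idm X) = idm X;
  star_comp : forall (X Y Z : ob) (g : hom Y Z) (f : hom X Y),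
      star (comp g f) = comp (star f) (star g);
  star_star : forall (X Y : ob) (f : hom X Y), star (star f) = f
}.

Arguments hom {s}.
Arguments comp {s X Y Z}.
Arguments idm {s}.
Arguments star {s X Y}.

Section Defs.
Variable C : StarCat.

Definition monic {A X : C} (m : hom A X) : Prop :=
  forall (W : C) (u v : hom W A), comp m u = comp m v -> u = v.
Definition epic {A X : C} (e : hom A X) : Prop :=
  forall (W : C) (u v : hom X W), comp u e = comp v e -> u = v.
Definition isometry {X Y : C} (f : hom X Y) : Prop := comp (star f) f = idm X.
Definition unitary {X Y : C} (f : hom X Y) : Prop :=
  isometry f /\ exists g : hom Y X, comp g f = idm X /\ comp f g = idm Y.
Definition partial_isometry {X Y : C} (f : hom X Y) : Prop :=
  f = comp f (comp (star f) f).

Definition zero_object (Z : C) : Prop :=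
  forall X : C, (exists! u : hom Z X, True) /\ (exists! v : hom X Z, True).
Definition zero_morph {X Y : C} (f : hom X Y) : Prop :=
  exists (Z : C) (a : hom X Z) (b : hom Z Y), zero_object Z /\ f = comp b a.

Definition is_kernel {K X Y : C} (h : hom X Y) (k : hom K X) : Prop :=
  zero_morph (comp h k) /\
  forall (W : C) (w : hom W X), zero_morph (comp h w) ->
    exists! u : hom W K, comp k u = w.

Definition biproduct {X1 X2 S : C} (s1 : hom X1 S) (r1 : hom S X1)
    (s2 : hom X2 S) (r2 : hom S X2) : Prop :=
  comp r1 s1 = idm X1 /\ comp r2 s2 = idm X2 /\
  zero_morph (comp r1 s2) /\ zero_morph (comp r2 s1) /\
  (forall (W : C) (a : hom W X1) (b : hom W X2),
      exists! u : hom W S, comp r1 u = a /\ comp r2 u = b) /\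
  (forall (W : C) (a : hom X1 W) (b : hom X2 W),
      exists! u : hom S W, comp u s1 = a /\ comp u s2 = b).
Definition orthonormal_biproduct {X1 X2 S : C} (s1 : hom X1 S) (r1 : hom S X1)
    (s2 : hom X2 S) (r2 : hom S X2) : Prop :=
  biproduct s1 r1 s2 r2 /\ r1 = star s1 /\ r2 = star s2.

Definition preHilbert : Prop :=
  (exists Z : C, zero_object Z) /\
  (forall X1 X2 : C, exists (S : C) (s1 : hom X1 S) (r1 : hom S X1)
       (s2 : hom X2 S) (r2 : hom S X2), orthonormal_biproduct s1 r1 s2 r2) /\
  (forall (X Y : C) (h : hom X Y), exists (K : C) (k : hom K X),
       is_kernel h k /\ isometry k) /\
  (forall (X S : C) (s1 : hom X S) (r1 : hom S X) (s2 : hom X S) (r2 : hom S X),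
       orthonormal_biproduct s1 r1 s2 r2 ->
       forall d : hom X S, comp r1 d = idm X -> comp r2 d = idm X ->
       exists (Z : C) (q : hom S Z), is_kernel q d).

(* subobjects: represented by monomorphisms, preordered by factorization *)
Definition sub_le {A B X : C} (m : hom A X) (n : hom B X) : Prop :=
  exists u : hom A B, m = comp n u.
Definition sub_eq {A B X : C} (m : hom A X) (n : hom B X) : Prop :=
  sub_le m n /\ sub_le n m.

Definition is_range {A X M : C} (f : hom A X) (m : hom M X) : Prop :=
  monic m /\ (exists u : hom A M, f = comp m u) /\
  forall (N : C) (n : hom N X), monic n ->
    (exists v : hom A N, f = comp n v) -> sub_le m n.

Definition is_perp {M P X : C} (m : hom M X) (p : hom P X) : Prop :=
  is_kernel (star m) p.

(* Ker h >= (Ran f)^perp, and Ker h <= (Ran f)^perp, stated for all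
   representatives (these exist in a pre-Hilbert *-category). *)
Definition ker_ge_perp_ran {A X Y : C} (h : hom X Y) (f : hom A X) : Prop :=
  forall (K M P : C) (k : hom K X) (m : hom M X) (p : hom P X),
    is_kernel h k -> is_range f m -> is_perp m p -> sub_le p k.
Definition ker_le_perp_ran {A X Y : C} (h : hom X Y) (f : hom A X) : Prop :=
  forall (K M P : C) (k : hom K X) (m : hom M X) (p : hom P X),
    is_kernel h k -> is_range f m -> is_perp m p -> sub_le k p.

Definition ran_perpperp_eq {X Y A : C} (h : hom X Y) (g : hom A Y) : Prop :=
  forall (M1 P1 Q1 M2 P2 Q2 : C) (m1 : hom M1 Y) (p1 : hom P1 Y) (q1 : hom Q1 Y)
         (m2 : hom M2 Y) (p2 : hom P2 Y) (q2 : hom Q2 Y),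
    is_range h m1 -> is_perp m1 p1 -> is_perp p1 q1 ->
    is_range g m2 -> is_perp m2 p2 -> is_perp p2 q2 ->
    sub_eq q1 q2.

End Defs.

Arguments monic {C A X}.
Arguments epic {C A X}.
Arguments isometry {C X Y}.
Arguments unitary {C X Y}.
Arguments partial_isometry {C X Y}.
Arguments zero_object {C}.
Arguments zero_morph {C X Y}.
Arguments is_kernel {C K X Y}.
Arguments biproduct {C X1 X2 S}.
Arguments orthonormal_biproduct {C X1 X2 S}.
Arguments sub_le {C A B X}.
Arguments sub_eq {C A B X}.
Arguments is_range {C A X M}.
Arguments is_perp {C M P X}.
Arguments ker_ge_perp_ran {C A X Y}.
Arguments ker_le_perp_ran {C A X Y}.
Arguments ran_perpperp_eq {C X Y A}.

(* Let p be an isometric kernel of f†; it represents (Ran f)^⊥, and 1 - p p† is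
   the projection onto (Ran f)^⊥⊥.  For any extension e of g along f, h = e (1 - p p†)
   is again an extension and kills p, i.e. Ker h >= (Ran f)^⊥.  It is the only such
   extension, because a morphism killing both f and p is zero.  Moreover f†f = g†g
   holds iff h†h = 1 - p p†, which unpacks into (iii); when f is epic, 1 - p p† = 1,
   giving (iv) and, with g = hf epic, (v).  Subtraction of morphisms is available
   because the orthonormal biproducts make every hom-set a commutative monoid, and
   axiom (R4), that the diagonal is a kernel, provides additive inverses. *)

From Stdlib Require Import IndefiniteDescription.

Declare Scope hom_scope.
Local Open Scope hom_scope.
Notation "g ∘ f" := (comp g f) (at level 40, left associativity) : hom_scope.
Notation "f †" := (star f) (at level 2, left associativity, format "f †") : hom_scope.
Notation "1" := (idm _) : hom_scope.

Section PreHilbert.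
Context {C : StarCat} (HC : preHilbert C).

Lemma star_inj {X Y : C} (f g : hom X Y) : f† = g† -> f = g.
Proof. intros E. rewrite <- (star_star _ _ _ f), E, star_star. reflexivity. Qed.

Lemma isometry_monic {X Y : C} {k : hom X Y} : isometry k -> monic k.
Proof.
  intros Hk W u v E.
  rewrite <- (comp_id_l _ _ _ u), <- (comp_id_l _ _ _ v), <- Hk, <- !comp_assoc, E.
  reflexivity.
Qed.

Lemma sub_le_trans {A B D X : C} {m : hom A X} {n : hom B X} {o : hom D X} :
  sub_le m n -> sub_le n o -> sub_le m o.
Proof. intros [u ->] [v ->]. exists (v ∘ u). symmetry. apply comp_assoc. Qed.

Lemma epic_compl {A X Y : C} (h : hom X Y) (f : hom A X) : epic (h ∘ f) -> epic h.
Proof. intros Hhf W u v E. apply Hhf. rewrite !comp_assoc, E. reflexivity. Qed.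

Lemma isometry_epic_unitary {X Y : C} (h : hom X Y) : isometry h -> epic h -> unitary h.
Proof.
  intros Hiso Hepi. split; [exact Hiso |]. exists h†. split; [exact Hiso |].
  apply Hepi. rewrite <- comp_assoc, Hiso, comp_id_l, comp_id_r. reflexivity.
Qed.

(** * Zero morphisms and kernels *)

Lemma zero_morph_compl {X Y Z : C} (g : hom Y Z) (f : hom X Y) :
  zero_morph f -> zero_morph (g ∘ f).
Proof.
  intros [O [a [b [HO ->]]]]. exists O, a, (g ∘ b). split; [exact HO | apply comp_assoc].
Qed.

Lemma zero_morph_compr {X Y Z : C} (g : hom Y Z) (f : hom X Y) :
  zero_morph g -> zero_morph (g ∘ f).
Proof.
  intros [O [a [b [HO ->]]]]. exists O, (a ∘ f), b.
  split; [exact HO | symmetry; apply comp_assoc].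
Qed.

Lemma zero_morph_star {X Y : C} (f : hom X Y) : zero_morph f -> zero_morph f†.
Proof. intros [O [a [b [HO ->]]]]. exists O, b†, a†. split; [exact HO | apply star_comp]. Qed.

Lemma zero_morph_unique {X Y : C} (f f' : hom X Y) :
  zero_morph f -> zero_morph f' -> f = f'.
Proof.
  intros [O [a [b [HO ->]]]] [O' [a' [b' [HO' ->]]]].
  destruct (HO O') as [[i _] _].
  destruct (HO' X) as [_ [v [_ Hv]]].
  destruct (HO Y) as [[w [_ Hw]] _].
  assert (Ea : a' = i ∘ a) by (rewrite <- (Hv a' I); apply Hv; exact I).
  assert (Eb : b = b' ∘ i) by (rewrite <- (Hw b I); apply Hw; exact I).
  rewrite Ea, Eb. symmetry. apply comp_assoc.
Qed.

Lemma exists_zero_morph (X Y : C) : exists f : hom X Y, zero_morph f.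
Proof.
  destruct HC as [[O HO] _].
  destruct (HO X) as [_ [a _]]. destruct (HO Y) as [[b _] _].
  exists (b ∘ a), O, a, b. split; [exact HO | reflexivity].
Qed.

Definition zero (X Y : C) : hom X Y :=
  proj1_sig (constructive_indefinite_description _ (exists_zero_morph X Y)).

Notation "0" := (zero _ _) : hom_scope.

Lemma zero_morph_zero (X Y : C) : zero_morph (zero X Y).
Proof. exact (proj2_sig (constructive_indefinite_description _ (exists_zero_morph X Y))). Qed.

Lemma zero_morphE {X Y : C} (f : hom X Y) : zero_morph f -> f = 0.
Proof. intros Hf. exact (zero_morph_unique f 0 Hf (zero_morph_zero X Y)). Qed.

Lemma comp0m {X Y Z : C} (f : hom X Y) : zero Y Z ∘ f = 0.
Proof. apply zero_morphE, zero_morph_compr, zero_morph_zero. Qed.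

Lemma compm0 {X Y Z : C} (g : hom Y Z) : g ∘ zero X Y = 0.
Proof. apply zero_morphE, zero_morph_compl, zero_morph_zero. Qed.

Lemma star0 {X Y : C} : (zero X Y)† = 0.
Proof. apply zero_morphE, zero_morph_star, zero_morph_zero. Qed.

Lemma star_eq0 {X Y : C} (f : hom X Y) : f† = 0 -> f = 0.
Proof. intros E. apply star_inj. rewrite E, star0. reflexivity. Qed.

Lemma isometry_comp_eq0 {W X Y : C} {j : hom X Y} (d : hom W X) :
  isometry j -> j ∘ d = 0 -> d = 0.
Proof. intros Hj E. apply (isometry_monic Hj). rewrite E, compm0. reflexivity. Qed.

Lemma kernel_comp0 {K X Y : C} {h : hom X Y} {k : hom K X} : is_kernel h k -> h ∘ k = 0.
Proof. intros [H _]. exact (zero_morphE _ H). Qed.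

Lemma kernel_factor {K W X Y : C} {h : hom X Y} {k : hom K X} (w : hom W X) :
  is_kernel h k -> h ∘ w = 0 -> sub_le w k.
Proof.
  intros [_ Hk] E. destruct (Hk W w) as [u [Hu _]].
  - rewrite E. apply zero_morph_zero.
  - exists u. symmetry. exact Hu.
Qed.

Lemma sub_le_kernel {K W X Y : C} {h : hom X Y} {k : hom K X} (w : hom W X) :
  is_kernel h k -> sub_le w k -> h ∘ w = 0.
Proof. intros Hk [u ->]. rewrite comp_assoc, (kernel_comp0 Hk), comp0m. reflexivity. Qed.

Lemma exists_isometric_kernel {X Y : C} (h : hom X Y) :
  exists K (k : hom K X), is_kernel h k /\ isometry k.
Proof. destruct HC as [_ [_ [R3 _]]]. apply R3. Qed.

Lemma ker_perp_orth {J K W X Y : C} {h : hom X Y} {k : hom K X} {j : hom J X} (t : hom W X) :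
  is_kernel h k -> is_kernel k† j -> j† ∘ t = 0 -> h ∘ t = 0.
Proof.
  intros Hk Hj Ht.
  destruct (kernel_factor h† Hj) as [v Hv].
  { rewrite <- star_comp, (kernel_comp0 Hk), star0. reflexivity. }
  rewrite <- (star_star _ _ _ h), Hv, star_comp, <- comp_assoc, Ht, compm0. reflexivity.
Qed.

(** * Biproducts and addition of morphisms *)

Record biprod (X1 X2 : C) := Biprod {
  biprod_obj : C;
  biprod_in1 : hom X1 biprod_obj;
  biprod_in2 : hom X2 biprod_obj;
  biprod_spec : biproduct biprod_in1 biprod_in1† biprod_in2 biprod_in2† }.

Lemma exists_biprod (X1 X2 : C) : exists _ : biprod X1 X2, True.
Proof.
  destruct HC as [_ [R2 _]].
  destruct (R2 X1 X2) as [S [s1 [r1 [s2 [r2 [Hb [-> ->]]]]]]].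
  exists (Biprod X1 X2 S s1 s2 Hb). exact I.
Qed.

Definition the_biprod (X1 X2 : C) : biprod X1 X2 :=
  proj1_sig (constructive_indefinite_description _ (exists_biprod X1 X2)).
Definition dsum (X1 X2 : C) : C := biprod_obj _ _ (the_biprod X1 X2).
Notation "X1 ⊕ X2" := (dsum X1 X2) (at level 50) : hom_scope.
Definition in1 {X1 X2 : C} : hom X1 (X1 ⊕ X2) := biprod_in1 _ _ (the_biprod X1 X2).
Definition in2 {X1 X2 : C} : hom X2 (X1 ⊕ X2) := biprod_in2 _ _ (the_biprod X1 X2).

Lemma dsum_spec (X1 X2 : C) : biproduct (@in1 X1 X2) in1† in2 in2†.
Proof. exact (biprod_spec _ _ (the_biprod X1 X2)). Qed.

Lemma in1K {X1 X2 : C} : in1† ∘ @in1 X1 X2 = 1.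
Proof. apply dsum_spec. Qed.
Lemma in2K {X1 X2 : C} : in2† ∘ @in2 X1 X2 = 1.
Proof. apply dsum_spec. Qed.
Lemma in1_in2 {X1 X2 : C} : in1† ∘ @in2 X1 X2 = 0.
Proof. apply zero_morphE, dsum_spec. Qed.
Lemma in2_in1 {X1 X2 : C} : in2† ∘ @in1 X1 X2 = 0.
Proof. apply zero_morphE, dsum_spec. Qed.

Lemma exists_pair {W X1 X2 : C} (a : hom W X1) (b : hom W X2) :
  exists u : hom W (X1 ⊕ X2), in1† ∘ u = a /\ in2† ∘ u = b.
Proof.
  destruct (dsum_spec X1 X2) as [_ [_ [_ [_ [Hpair _]]]]].
  destruct (Hpair W a b) as [u [Hu _]]. exists u. exact Hu.
Qed.

Definition pair {W X1 X2 : C} (a : hom W X1) (b : hom W X2) : hom W (X1 ⊕ X2) :=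
  proj1_sig (constructive_indefinite_description _ (exists_pair a b)).
Definition copair {W X1 X2 : C} (a : hom X1 W) (b : hom X2 W) : hom (X1 ⊕ X2) W :=
  (pair a† b†)†.

Lemma pairK1 {W X1 X2 : C} (a : hom W X1) (b : hom W X2) : in1† ∘ pair a b = a.
Proof. exact (proj1 (proj2_sig (constructive_indefinite_description _ (exists_pair a b)))). Qed.
Lemma pairK2 {W X1 X2 : C} (a : hom W X1) (b : hom W X2) : in2† ∘ pair a b = b.
Proof. exact (proj2 (proj2_sig (constructive_indefinite_description _ (exists_pair a b)))). Qed.

Lemma copairK1 {W X1 X2 : C} (a : hom X1 W) (b : hom X2 W) : copair a b ∘ in1 = a.
Proof.
  apply star_inj. unfold copair. rewrite star_comp, star_star, pairK1. reflexivity.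
Qed.
Lemma copairK2 {W X1 X2 : C} (a : hom X1 W) (b : hom X2 W) : copair a b ∘ in2 = b.
Proof.
  apply star_inj. unfold copair. rewrite star_comp, star_star, pairK2. reflexivity.
Qed.

Lemma dsum_ext {W X1 X2 : C} (u v : hom W (X1 ⊕ X2)) :
  in1† ∘ u = in1† ∘ v -> in2† ∘ u = in2† ∘ v -> u = v.
Proof.
  intros E1 E2.
  destruct (dsum_spec X1 X2) as [_ [_ [_ [_ [Hpair _]]]]].
  destruct (Hpair W (in1† ∘ u) (in2† ∘ u)) as [x [_ Hx]].
  transitivity x; [symmetry|]; apply Hx; split; auto.
Qed.

Lemma dsum_coext {W X1 X2 : C} (u v : hom (X1 ⊕ X2) W) :
  u ∘ in1 = v ∘ in1 -> u ∘ in2 = v ∘ in2 -> u = v.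
Proof.
  intros E1 E2. apply star_inj, dsum_ext; rewrite <- !star_comp; f_equal; assumption.
Qed.

(* Lets a rule [a ∘ b = c] rewrite inside a left-associated composite. *)
Lemma comp_lift {V W X Y : C} {a : hom X Y} {b : hom W X} {c : hom W Y}
  (E : a ∘ b = c) (x : hom Y V) : x ∘ a ∘ b = x ∘ c.
Proof. rewrite <- comp_assoc, E. reflexivity. Qed.

Ltac dsum_simpl :=
  repeat progress (rewrite ?comp_assoc;
    rewrite ?comp_id_l, ?comp_id_r, ?comp0m, ?compm0,
      ?in1K, ?in2K, ?in1_in2, ?in2_in1, ?pairK1, ?pairK2, ?copairK1, ?copairK2,
      ?(comp_lift in1K), ?(comp_lift in2K), ?(comp_lift in1_in2), ?(comp_lift in2_in1),
      ?(comp_lift (pairK1 _ _)), ?(comp_lift (pairK2 _ _)),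
      ?(comp_lift (copairK1 _ _)), ?(comp_lift (copairK2 _ _))).

Lemma pair_comp {V W X1 X2 : C} (a : hom W X1) (b : hom W X2) (k : hom V W) :
  pair a b ∘ k = pair (a ∘ k) (b ∘ k).
Proof. apply dsum_ext; dsum_simpl; reflexivity. Qed.

Lemma comp_copair {V W X1 X2 : C} (a : hom X1 W) (b : hom X2 W) (k : hom W V) :
  k ∘ copair a b = copair (k ∘ a) (k ∘ b).
Proof. apply dsum_coext; dsum_simpl; reflexivity. Qed.

Lemma star_pair {W X1 X2 : C} (a : hom W X1) (b : hom W X2) :
  (pair a b)† = copair a† b†.
Proof. unfold copair. rewrite !star_star. reflexivity. Qed.

Lemma pair_eta {W X1 X2 : C} (u : hom W (X1 ⊕ X2)) : u = pair (in1† ∘ u) (in2† ∘ u).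
Proof. apply dsum_ext; dsum_simpl; reflexivity. Qed.

Definition diag (X : C) : hom X (X ⊕ X) := pair 1 1.

Definition add {X Y : C} (f g : hom X Y) : hom X Y := (diag Y)† ∘ pair f g.
Notation "f + g" := (add f g) : hom_scope.

Lemma pair_m0 {W X1 X2 : C} (a : hom W X1) : pair a (zero W X2) = in1 ∘ a.
Proof. apply dsum_ext; dsum_simpl; reflexivity. Qed.
Lemma pair_0m {W X1 X2 : C} (b : hom W X2) : pair (zero W X1) b = in2 ∘ b.
Proof. apply dsum_ext; dsum_simpl; reflexivity. Qed.

Lemma codiag_in1 {X : C} : (diag X)† ∘ in1 = 1.
Proof. apply star_inj. rewrite star_comp, star_star, star_id. apply pairK1. Qed.
Lemma codiag_in2 {X : C} : (diag X)† ∘ in2 = 1.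
Proof. apply star_inj. rewrite star_comp, star_star, star_id. apply pairK2. Qed.

Lemma add_copairE {X Y : C} (f g : hom X Y) : f + g = copair f g ∘ diag X.
Proof.
  assert (Hdiag : pair f g = pair (f ∘ in1†) (g ∘ in2†) ∘ diag X).
  { unfold diag. apply dsum_ext; dsum_simpl; reflexivity. }
  assert (Hcodiag : (diag Y)† ∘ pair (f ∘ in1†) (g ∘ in2†) = copair f g).
  { apply dsum_coext; rewrite <- comp_assoc, pair_comp; dsum_simpl.
    - rewrite pair_m0, comp_assoc, codiag_in1, comp_id_l. reflexivity.
    - rewrite pair_0m, comp_assoc, codiag_in2, comp_id_l. reflexivity. }
  unfold add. rewrite Hdiag, comp_assoc, Hcodiag. reflexivity.
Qed.

Lemma compDr {X Y Z : C} (f g : hom X Y) (h : hom Y Z) : h ∘ (f + g) = h ∘ f + h ∘ g.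
Proof. rewrite !add_copairE, comp_assoc, comp_copair. reflexivity. Qed.

Lemma compDl {V X Y : C} (f g : hom X Y) (k : hom V X) : (f + g) ∘ k = f ∘ k + g ∘ k.
Proof. unfold add. rewrite <- comp_assoc, pair_comp. reflexivity. Qed.

Lemma add0m {X Y : C} (f : hom X Y) : 0 + f = f.
Proof. unfold add. rewrite pair_0m, comp_assoc, codiag_in2, comp_id_l. reflexivity. Qed.

Lemma addm0 {X Y : C} (f : hom X Y) : f + 0 = f.
Proof. unfold add. rewrite pair_m0, comp_assoc, codiag_in1, comp_id_l. reflexivity. Qed.

Lemma starD {X Y : C} (f g : hom X Y) : (f + g)† = f† + g†.
Proof.
  rewrite add_copairE. unfold add, copair. rewrite star_comp, !star_star. reflexivity.
Qed.

(* With the unit laws this yields commutativity and associativity (Eckmann-Hilton). *)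
Lemma add_interchange {X Y : C} (a b c d : hom X Y) :
  (a + b) + (c + d) = (a + c) + (b + d).
Proof.
  assert (Hmatrix : pair (copair a b) (copair c d) = copair (pair a c) (pair b d)).
  { apply dsum_ext; apply dsum_coext; dsum_simpl; reflexivity. }
  rewrite (add_copairE a b), (add_copairE c d), (add_copairE (a + c)).
  unfold add at 1. rewrite <- pair_comp, Hmatrix, comp_assoc, comp_copair. reflexivity.
Qed.

Lemma addmC {X Y : C} (a b : hom X Y) : a + b = b + a.
Proof.
  pose proof (add_interchange 0 a b 0) as H.
  rewrite !add0m, !addm0 in H. exact H.
Qed.

Lemma addmA {X Y : C} (a b c : hom X Y) : a + b + c = a + (b + c).
Proof.
  pose proof (add_interchange a b 0 c) as H.
  rewrite !add0m, !addm0 in H. exact H.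
Qed.

Lemma pair_add {W X1 X2 : C} (a : hom W X1) (b : hom W X2) : pair a b = in1 ∘ a + in2 ∘ b.
Proof.
  apply dsum_ext; rewrite !compDr; dsum_simpl; rewrite ?add0m, ?addm0; reflexivity.
Qed.

Lemma copair_pair {V W X1 X2 : C} (a : hom X1 V) (b : hom X2 V) (c : hom W X1) (d : hom W X2) :
  copair a b ∘ pair c d = a ∘ c + b ∘ d.
Proof. rewrite pair_add, compDr. dsum_simpl. reflexivity. Qed.

(** * Additive inverses *)

Lemma codiag_kernel_orth {K W X : C} (k : hom K (X ⊕ X)) (t : hom W (X ⊕ X)) :
  is_kernel (diag X)† k -> k† ∘ t = 0 -> in1† ∘ t = in2† ∘ t.
Proof.
  intros Hk Ht.
  destruct HC as [_ [_ [_ R4]]].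
  destruct (R4 X (X ⊕ X) in1 in1† in2 in2† (conj (dsum_spec X X) (conj eq_refl eq_refl))
              (diag X) (pairK1 1 1) (pairK2 1 1)) as [Z [q Hq]].
  destruct (kernel_factor t Hq (ker_perp_orth t Hq Hk Ht)) as [z ->].
  unfold diag. dsum_simpl. reflexivity.
Qed.

(* With k = ⟨u, w⟩ an isometric kernel of the codiagonal, u + w = 0 and
   u†u + w†w = 1.  The morphism ⟨1 + w u†, u u†⟩ is orthogonal to k, hence factors
   through the diagonal: 1 + w u† = u u†, so w u† + w u† is a negative of 1. *)
Lemma exists_oppid (X : C) : exists n : hom X X, 1 + n = 0.
Proof.
  destruct (exists_isometric_kernel (diag X)†) as [K [k [Hk Hki]]].
  set (u := in1† ∘ k). set (w := in2† ∘ k).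
  assert (Hk_pair : k = pair u w) by apply pair_eta.
  assert (Hk_star : k† = copair u† w†) by (rewrite Hk_pair at 1; apply star_pair).
  assert (Huw : u + w = 0).
  { unfold add. rewrite <- Hk_pair. exact (kernel_comp0 Hk). }
  assert (Hgram : u† ∘ u + w† ∘ w = 1).
  { rewrite <- copair_pair, <- Hk_star, <- Hk_pair. exact Hki. }
  assert (Hcross : 1 + u† ∘ w + w† ∘ u = 0).
  { rewrite <- Hgram, addmA, add_interchange, <- !compDr, (addmC w u), Huw,
      !compm0, add0m.
    reflexivity. }
  set (t := pair (1 + w ∘ u†) (u ∘ u†)).
  assert (Ht : k† ∘ t = 0).
  { unfold t. rewrite Hk_star, copair_pair, !compDr, !comp_assoc, comp_id_r,
      <- (comp_id_l _ _ _ u†) at 1.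
    rewrite <- !compDl, Hcross, comp0m. reflexivity. }
  pose proof (codiag_kernel_orth k t Hk Ht) as Hcomp.
  unfold t in Hcomp. rewrite pairK1, pairK2 in Hcomp.
  exists (w ∘ u† + w ∘ u†).
  rewrite <- addmA, Hcomp, <- compDl, Huw, comp0m. reflexivity.
Qed.

Definition oppid (X : C) : hom X X :=
  proj1_sig (constructive_indefinite_description _ (exists_oppid X)).
Definition opp {X Y : C} (f : hom X Y) : hom X Y := oppid Y ∘ f.
Notation "- f" := (opp f) : hom_scope.
Notation "f - g" := (add f (opp g)) : hom_scope.

Lemma add_oppid (X : C) : 1 + oppid X = 0.
Proof. exact (proj2_sig (constructive_indefinite_description _ (exists_oppid X))). Qed.

Lemma addmN {X Y : C} (f : hom X Y) : f - f = 0.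
Proof.
  unfold opp. rewrite <- (comp_id_l _ _ _ f) at 1.
  rewrite <- compDl, add_oppid, comp0m. reflexivity.
Qed.

Lemma addNm {X Y : C} (f : hom X Y) : - f + f = 0.
Proof. rewrite addmC. apply addmN. Qed.

Lemma addIm {X Y : C} (a b c : hom X Y) : a + c = b + c -> a = b.
Proof.
  intros E. rewrite <- (addm0 a), <- (addm0 b), <- (addmN c), <- !addmA, E. reflexivity.
Qed.

Lemma subm0_eq {X Y : C} (a b : hom X Y) : a - b = 0 -> a = b.
Proof. intros E. apply (addIm _ _ (- b)). rewrite E, addmN. reflexivity. Qed.

Lemma oppm_unique {X Y : C} (a b : hom X Y) : a + b = 0 -> b = - a.
Proof. intros E. apply (addIm _ _ a). rewrite addmC, E, addNm. reflexivity. Qed.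

Lemma compNr {X Y Z : C} (f : hom X Y) (g : hom Y Z) : g ∘ - f = - (g ∘ f).
Proof. apply oppm_unique. rewrite <- compDr, addmN, compm0. reflexivity. Qed.

Lemma compNl {V X Y : C} (f : hom X Y) (k : hom V X) : (- f) ∘ k = - (f ∘ k).
Proof. unfold opp. rewrite comp_assoc. reflexivity. Qed.

Lemma starN {X Y : C} (f : hom X Y) : (- f)† = - f†.
Proof. apply oppm_unique. rewrite <- starD, addmN, star0. reflexivity. Qed.

Lemma oppm0 {X Y : C} : - zero X Y = 0.
Proof. apply compm0. Qed.

Lemma subm_swap {X Y : C} (a b c : hom X Y) : a - b = c -> b = a - c.
Proof.
  intros <-. apply (addIm _ _ (a - b)).
  rewrite (addmA a (- (a - b))), addNm, addm0, (addmC a), <- addmA, addmN, add0m.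
  reflexivity.
Qed.

(** * Ranges and orthogonal complements *)

Lemma exists_range {A X : C} (f : hom A X) : exists M (m : hom M X), is_range f m.
Proof.
  destruct (exists_isometric_kernel f) as [I [i [Hi Hii]]].
  destruct (exists_isometric_kernel i†) as [J [j [Hj Hji]]].
  exists J, (f ∘ j). split; [| split].
  - intros W a b Eab. apply subm0_eq, (isometry_comp_eq0 _ Hji).
    assert (Hd : f ∘ (j ∘ (a - b)) = 0).
    { rewrite !compDr, !compNr, !comp_assoc, Eab. apply addmN. }
    destruct (kernel_factor _ Hi Hd) as [v Hv].
    assert (Hv0 : v = 0).
    { rewrite <- (comp_id_l _ _ _ v), <- Hii, <- comp_assoc, <- Hv, comp_assoc,
        (kernel_comp0 Hj), comp0m.
      reflexivity. }
    rewrite Hv, Hv0, compm0. reflexivity.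
  - exists j†. rewrite <- comp_assoc. apply subm0_eq.
    rewrite <- (comp_id_r _ _ _ f) at 1. rewrite <- compNr, <- compDr.
    apply (ker_perp_orth _ Hi Hj).
    rewrite compDr, compNr, comp_assoc, Hji, comp_id_l, comp_id_r. apply addmN.
  - intros N n _ [v ->]. exists (v ∘ j). symmetry. apply comp_assoc.
Qed.

Lemma perp_antimono {M M' P P' X : C} {m : hom M X} {m' : hom M' X}
  {p : hom P X} {p' : hom P' X} :
  sub_le m m' -> is_perp m p -> is_perp m' p' -> sub_le p' p.
Proof.
  intros [u Hu] Hp Hp'. apply (kernel_factor p' Hp).
  rewrite Hu, star_comp, <- comp_assoc, (kernel_comp0 Hp'), compm0. reflexivity.
Qed.

Lemma range_orthE {A M W X : C} {h : hom A X} {m : hom M X} (t : hom W X) :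
  is_range h m -> (m† ∘ t = 0 <-> h† ∘ t = 0).
Proof.
  intros [_ [[u Hu] Hmin]]. split; intros Ht.
  - rewrite Hu, star_comp, <- comp_assoc, Ht, compm0. reflexivity.
  - destruct (exists_isometric_kernel t†) as [N [n [Hn Hni]]].
    assert (Hhn : sub_le h n).
    { apply (kernel_factor h Hn), star_eq0. rewrite star_comp, star_star. exact Ht. }
    destruct (Hmin N n (isometry_monic Hni) Hhn) as [w ->].
    apply star_eq0.
    rewrite !star_comp, star_star, comp_assoc, (kernel_comp0 Hn), comp0m. reflexivity.
Qed.

Lemma kernel_star_perp_range {A M P P' X : C} {f : hom A X} {m : hom M X}
  {p : hom P X} {p' : hom P' X} :
  is_kernel f† p -> is_range f m -> is_perp m p' -> sub_eq p p'.
Proof.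
  intros Hp Hm Hp'. split.
  - apply (kernel_factor p Hp'), (range_orthE p Hm). exact (kernel_comp0 Hp).
  - apply (kernel_factor p' Hp), (range_orthE p' Hm). exact (kernel_comp0 Hp').
Qed.

Lemma exists_perp_range {A X : C} (f : hom A X) :
  exists M P (m : hom M X) (p : hom P X), is_range f m /\ is_perp m p.
Proof.
  destruct (exists_range f) as [M [m Hm]].
  destruct (exists_isometric_kernel m†) as [P [p [Hp _]]].
  exists M, P, m, p. split; assumption.
Qed.

Lemma ker_ge_perp_ranE {A P X Y : C} (h : hom X Y) {f : hom A X} {p : hom P X} :
  is_kernel f† p -> (ker_ge_perp_ran h f <-> h ∘ p = 0).
Proof.
  intros Hp. split.
  - intros Hge.
    destruct (exists_isometric_kernel h) as [K [k [Hk _]]].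
    destruct (exists_perp_range f) as [M [P' [m [p' [Hm Hp']]]]].
    apply (sub_le_kernel p Hk).
    exact (sub_le_trans (proj1 (kernel_star_perp_range Hp Hm Hp')) (Hge K M P' k m p' Hk Hm Hp')).
  - intros Hhp K M P' k m p' Hk Hm Hp'.
    apply (kernel_factor p' Hk).
    destruct (proj2 (kernel_star_perp_range Hp Hm Hp')) as [a ->].
    rewrite comp_assoc, Hhp, comp0m. reflexivity.
Qed.

Lemma ker_le_perp_ranE {A P X Y : C} (h : hom X Y) {f : hom A X} {p : hom P X} :
  is_kernel f† p ->
  (ker_le_perp_ran h f <-> forall K (k : hom K X), is_kernel h k -> sub_le k p).
Proof.
  intros Hp. split.
  - intros Hle K k Hk.
    destruct (exists_perp_range f) as [M [P' [m [p' [Hm Hp']]]]].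
    exact (sub_le_trans (Hle K M P' k m p' Hk Hm Hp') (proj2 (kernel_star_perp_range Hp Hm Hp'))).
  - intros Hle K M P' k m p' Hk Hm Hp'.
    exact (sub_le_trans (Hle K k Hk) (proj1 (kernel_star_perp_range Hp Hm Hp'))).
Qed.

Lemma ran_perpperp_eq_of {A X Y : C} (h : hom X Y) (g : hom A Y) :
  (exists f, g = h ∘ f) -> (forall W (t : hom W Y), g† ∘ t = 0 -> h† ∘ t = 0) ->
  ran_perpperp_eq h g.
Proof.
  intros [f Hf] Horth M1 P1 Q1 M2 P2 Q2 m1 p1 q1 m2 p2 q2 Hm1 Hp1 Hq1 Hm2 Hp2 Hq2.
  assert (Hm21 : sub_le m2 m1).
  { destruct Hm1 as [Hm1 [[u Hu] _]]. apply (proj2 (proj2 Hm2) M1 m1 Hm1).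
    exists (u ∘ f). rewrite Hf, Hu. symmetry. apply comp_assoc. }
  assert (Hp21 : sub_le p2 p1).
  { apply (kernel_factor p2 Hp1), (range_orthE p2 Hm1), Horth, (range_orthE p2 Hm2).
    exact (kernel_comp0 Hp2). }
  split.
  - exact (perp_antimono Hp21 Hq2 Hq1).
  - exact (perp_antimono (perp_antimono Hm21 Hp2 Hp1) Hq1 Hq2).
Qed.

(** * The projection onto the closure of a range *)

Definition proj_perp {P X : C} (p : hom P X) : hom X X := 1 - p ∘ p†.

Section RangeProjection.
Context {A P X : C} {f : hom A X} {p : hom P X}.
Hypotheses (Hp : is_kernel f† p) (Hpi : isometry p).

Lemma proj_perp_star : (proj_perp p)† = proj_perp p.
Proof. unfold proj_perp. rewrite starD, starN, star_id, star_comp, star_star. reflexivity. Qed.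

Lemma comp_proj_perp {Y : C} (h : hom X Y) : h ∘ p = 0 -> h ∘ proj_perp p = h.
Proof.
  intros Hhp. unfold proj_perp.
  rewrite compDr, compNr, comp_id_r, comp_assoc, Hhp, comp0m, oppm0, addm0. reflexivity.
Qed.

Lemma proj_perp_comp {W : C} (t : hom W X) : p† ∘ t = 0 -> proj_perp p ∘ t = t.
Proof.
  intros Ht. apply star_inj.
  rewrite star_comp, proj_perp_star, comp_proj_perp; [reflexivity |].
  rewrite <- (star_star _ _ _ p), <- star_comp, Ht, star0. reflexivity.
Qed.

Lemma proj_perp_p : proj_perp p ∘ p = 0.
Proof.
  unfold proj_perp. rewrite compDl, compNl, comp_id_l, <- comp_assoc, Hpi, comp_id_r.
  apply addmN.
Qed.

Lemma proj_perp_eq0_le {W : C} (t : hom W X) : proj_perp p ∘ t = 0 <-> sub_le t p.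
Proof.
  split.
  - intros Ht. exists (p† ∘ t). rewrite comp_assoc. apply subm0_eq.
    rewrite <- Ht. unfold proj_perp. rewrite compDl, compNl, comp_id_l. reflexivity.
  - intros [u ->]. rewrite comp_assoc, proj_perp_p, comp0m. reflexivity.
Qed.

Lemma proj_perp_gram_iff {Y : C} (h : hom X Y) :
  h ∘ p = 0 ->
  (h† ∘ h = proj_perp p <->
   partial_isometry h /\ forall K (k : hom K X), is_kernel h k -> sub_le k p).
Proof.
  intros Hhp. split.
  - intros Hgram. split.
    + unfold partial_isometry. rewrite Hgram. symmetry. exact (comp_proj_perp h Hhp).
    + intros K k Hk. apply proj_perp_eq0_le.
      rewrite <- Hgram, <- comp_assoc, (kernel_comp0 Hk), compm0. reflexivity.
  - intros [Hpartial Hle].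
    destruct (exists_isometric_kernel h) as [K [k [Hk _]]].
    set (E := 1 - h† ∘ h).
    assert (HE_star : E† = E).
    { unfold E. rewrite starD, starN, star_id, star_comp, star_star. reflexivity. }
    assert (HE_p : E ∘ p = p).
    { unfold E. rewrite compDl, compNl, comp_id_l, <- comp_assoc, Hhp, compm0, oppm0, addm0.
      reflexivity. }
    assert (HhE : h ∘ E = 0).
    { unfold E. rewrite compDr, compNr, comp_id_r, <- Hpartial. apply addmN. }
    destruct (sub_le_trans (kernel_factor E Hk HhE) (Hle K k Hk)) as [u Hu].
    assert (Hu_star : u = p†).
    { rewrite <- (comp_id_l _ _ _ u), <- Hpi, <- comp_assoc, <- Hu, <- HE_star, <- star_comp, HE_p.
      reflexivity. }
    unfold proj_perp. apply subm_swap. fold E. rewrite Hu, Hu_star. reflexivity.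
Qed.

Lemma proj_perp_eq0 {W : C} (t : hom W X) : proj_perp p ∘ t = 0 <-> f† ∘ t = 0.
Proof.
  rewrite proj_perp_eq0_le. split.
  - exact (sub_le_kernel t Hp).
  - exact (kernel_factor t Hp).
Qed.

Lemma proj_perp_f : proj_perp p ∘ f = f.
Proof.
  apply proj_perp_comp, star_eq0. rewrite star_comp, star_star. exact (kernel_comp0 Hp).
Qed.

Lemma proj_perp_epic : epic f -> proj_perp p = 1.
Proof. intros Hf. apply Hf. rewrite proj_perp_f, comp_id_l. reflexivity. Qed.

Lemma eq0_of_range_perp {Y : C} (d : hom X Y) : d ∘ f = 0 -> d ∘ p = 0 -> d = 0.
Proof.
  intros Hdf Hdp. rewrite <- (comp_proj_perp d Hdp). apply star_eq0.
  rewrite star_comp, proj_perp_star. apply proj_perp_eq0.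
  rewrite <- star_comp, Hdf, star0. reflexivity.
Qed.

Context {Y : C} {g : hom A Y}.

Lemma extension_unique (h1 h2 : hom X Y) :
  h1 ∘ f = h2 ∘ f -> h1 ∘ p = 0 -> h2 ∘ p = 0 -> h1 = h2.
Proof.
  intros Ef Hp1 Hp2. apply subm0_eq, eq0_of_range_perp.
  - rewrite compDl, compNl, Ef. apply addmN.
  - rewrite compDl, compNl, Hp1, Hp2, oppm0, addm0. reflexivity.
Qed.

Lemma extension_orth (h : hom X Y) {W : C} (t : hom W Y) :
  h ∘ f = g -> h ∘ p = 0 -> g† ∘ t = 0 -> h† ∘ t = 0.
Proof.
  intros Hhf Hhp Ht.
  rewrite <- (comp_proj_perp h Hhp), star_comp, proj_perp_star, <- comp_assoc.
  apply proj_perp_eq0. rewrite comp_assoc, <- star_comp, Hhf. exact Ht.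
Qed.

Lemma gram_eq_iff (h : hom X Y) :
  h ∘ f = g -> h ∘ p = 0 -> (f† ∘ f = g† ∘ g <-> h† ∘ h = proj_perp p).
Proof.
  intros Hhf Hhp.
  assert (Hproj_h : proj_perp p ∘ h† = h†).
  { apply star_inj. rewrite star_comp, proj_perp_star, star_star. exact (comp_proj_perp h Hhp). }
  split; intros Hgram.
  - apply subm0_eq, eq0_of_range_perp.
    + rewrite compDl, compNl, <- comp_assoc, Hhf, proj_perp_f.
      assert (Hfix : proj_perp p ∘ (h† ∘ g - f) = h† ∘ g - f).
      { rewrite compDr, compNr, comp_assoc, Hproj_h, proj_perp_f. reflexivity. }
      rewrite <- Hfix. apply proj_perp_eq0.
      rewrite compDr, compNr, comp_assoc, <- star_comp, Hhf, Hgram. apply addmN.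
    + rewrite compDl, compNl, <- comp_assoc, Hhp, compm0, proj_perp_p, oppm0, addm0.
      reflexivity.
  - rewrite <- Hhf, star_comp, <- comp_assoc, (comp_assoc _ _ _ _ _ h† h f), Hgram, proj_perp_f.
    reflexivity.
Qed.

End RangeProjection.

End PreHilbert.

Theorem proposition7p8 (C : StarCat) (HC : preHilbert C)
  (A X Y : C) (f : hom A X) (g : hom A Y)
  (Hext : exists e : hom X Y, comp e f = g) :
  exists h : hom X Y,
    (* (i) *)
    (comp h f = g /\ ker_ge_perp_ran h f /\
     forall h' : hom X Y, comp h' f = g -> ker_ge_perp_ran h' f -> h' = h) /\
    (* (ii) *)
    ran_perpperp_eq h g /\
    (* (iii) *)
    (comp (star f) f = comp (star g) g <->
       partial_isometry h /\ ker_le_perp_ran h f) /\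
    (* (iv) *)
    (epic f -> (comp (star f) f = comp (star g) g <-> isometry h)) /\
    (* (v) *)
    (epic f -> epic g -> (comp (star f) f = comp (star g) g <-> unitary h)).
Proof.
  destruct Hext as [e He].
  destruct (exists_isometric_kernel HC f†) as [P [p [Hp Hpi]]].
  set (h := e ∘ proj_perp HC p).
  assert (Hhf : h ∘ f = g) by (unfold h; rewrite <- comp_assoc, (proj_perp_f HC Hp); exact He).
  assert (Hhp : h ∘ p = zero HC P Y).
  { unfold h. rewrite <- comp_assoc, (proj_perp_p HC Hpi), compm0. reflexivity. }
  assert (Hiv : epic f -> (f† ∘ f = g† ∘ g <-> isometry h)).
  { intros Hf. rewrite (gram_eq_iff HC Hp Hpi h Hhf Hhp), (proj_perp_epic HC Hp Hf). reflexivity. }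
  exists h. split; [| split; [| split; [| split]]].
  - split; [exact Hhf | split].
    + apply (ker_ge_perp_ranE HC h Hp). exact Hhp.
    + intros h' Hh'f Hh'.
      apply (extension_unique HC Hp Hpi); [congruence | | exact Hhp].
      exact (proj1 (ker_ge_perp_ranE HC h' Hp) Hh').
  - apply (ran_perpperp_eq_of HC); [exists f; symmetry; exact Hhf |].
    intros W t. exact (extension_orth HC Hp Hpi h t Hhf Hhp).
  - rewrite (gram_eq_iff HC Hp Hpi h Hhf Hhp), (proj_perp_gram_iff HC Hpi h Hhp),
      (ker_le_perp_ranE HC h Hp).
    reflexivity.
  - exact Hiv.
  - intros Hf Hg. rewrite (Hiv Hf). split.
    + intros Hiso. apply (isometry_epic_unitary h Hiso), (epic_compl h f). rewrite Hhf. exact Hg.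
    + intros [Hiso _]. exact Hiso.
Qed.
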